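(* Let $\|\cdot\|$ be a norm on $\mathbb{R}^d$, $\epsilon>0$, $A^\epsilon=A\oplus\overline{B_\epsilon(\mathbf 0)}$, $A^{-\epsilon}=((A^C)^\epsilon)^C$. For any set $A\in\mathscr U(\mathbb{R}^d)$, $$R^\epsilon(A)\ge R^\epsilon((A^\epsilon)^{-\epsilon}),\qquad R^\epsilon(A)\ge R^\epsilon((A^{-\epsilon})^\epsilon).$$
   Context: $\mathcal D$ is a probability distribution on $\mathbb{R}^d\times\{-1,+1\}$, $\eta(\mathbf x)=\mathcal D(Y=+1\mid\mathbf x)$, $\mathbb P$ the marginal, the completion of a Borel probability measure restricted to the universal $\sigma$-algebra $\mathscr U(\mathbb{R}^d)$ (which is closed under $A\mapsto A^\epsilon$). $R^\epsilon(A)=\int(1-\eta)\mathbb 1_{A^\epsilon}+\eta\mathbb 1_{(A^C)^\epsilon}\,d\mathbb P$. *)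

From HB Require Import structures.
From mathcomp Require Import all_boot all_order all_algebra.
From mathcomp Require Import all_classical all_reals all_analysis.
Set Implicit Arguments. Unset Strict Implicit. Unset Printing Implicit Defensive.
Import Order.TTheory GRing.Theory Num.Theory.
Import numFieldNormedType.Exports.
Local Open Scope classical_set_scope.
Local Open Scope ring_scope.

(* The Borel sigma-algebra on R^d = 'rV[R]_d (generated by the open sets;
   all norms on R^d induce the same topology). *)
Definition borelT (R : realType) (d : nat) :=
  g_sigma_algebraType (open : set (set 'rV[R]_d)).
HB.instance Definition _ (R : realType) (d : nat) :=
  Pointed.copy (borelT R d) (g_sigma_algebraType (open : set (set 'rV[R]_d))).
HB.instance Definition _ (R : realType) (d : nat) :=
  Measurable.copy (borelT R d) (g_sigma_algebraType (open : set (set 'rV[R]_d))).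

Section Defs.
Variables (R : realType) (d : nat).
Local Notation borelT := (borelT R d).

(* The universal sigma-algebra: sets that are measurable for the completion
   of every Borel probability measure. *)
Definition univ_meas (A : set 'rV[R]_d) : Prop :=
  forall mu : probability borelT R,
    exists B1 B2 : set borelT,
      [/\ measurable B1, measurable B2, B1 `<=` A, A `<=` B2 &
          mu (B2 `\` B1) = 0%E].

Lemma univ_meas0 : univ_meas set0.
Proof.
move=> mu; exists set0, set0; split; [exact: measurable0|exact: measurable0|by []|by []|].
by rewrite setD0 measure0.
Qed.

Lemma univ_measC A : univ_meas A -> univ_meas (~` A).
Proof.
move=> uA mu; have [B1 [B2 [mB1 mB2 B1A AB2 m0]]] := uA mu.
exists (~` B2), (~` B1); split.
- exact: measurableC.
- exact: measurableC.
- by apply: subsetC.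
- by apply: subsetC.
- by rewrite setDE setCK setIC -setDE.
Qed.

Lemma univ_meas_bigcup (F : (set 'rV[R]_d)^nat) :
  (forall i, univ_meas (F i)) -> univ_meas (\bigcup_i F i).
Proof.
move=> uF mu.
have [B1 HB1] := @choice _ _ (fun i (B1 : set borelT) => exists B2 : set borelT,
  [/\ measurable B1, measurable B2, B1 `<=` F i, F i `<=` B2 &
      mu (B2 `\` B1) = 0%E]) (fun i => uF i mu).
have [B2 HB2] := @choice _ _ (fun i (B2 : set borelT) =>
  [/\ measurable (B1 i), measurable B2, B1 i `<=` F i, F i `<=` B2 &
      mu (B2 `\` B1 i) = 0%E]) HB1.
exists (\bigcup_i B1 i), (\bigcup_i B2 i); split.
- by apply: bigcupT_measurable => i; case: (HB2 i).
- by apply: bigcupT_measurable => i; case: (HB2 i).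
- by apply: subset_bigcup => i _; case: (HB2 i).
- by apply: subset_bigcup => i _; case: (HB2 i).
have mD i : measurable (B2 i `\` B1 i).
  by case: (HB2 i) => m1 m2 _ _ _; exact: measurableD.
apply/eqP; rewrite eq_le measure_ge0 andbT.
have sub : \bigcup_i B2 i `\` \bigcup_i B1 i `<=` \bigcup_i (B2 i `\` B1 i).
  move=> x [[i _ B2x] nB1]; exists i => //; split => //.
  by move=> B1x; apply: nB1; exists i.
apply: (le_trans (le_measure _ _ _ sub)).
- rewrite inE; apply: measurableD; apply: bigcupT_measurable => i;
    by case: (HB2 i).
- by rewrite inE; exact: bigcupT_measurable.
apply: (le_trans (measure_sigma_subadditive _ mD _ _)).
- exact: bigcupT_measurable.
- by [].
rewrite eseries0 // => i _ _; by case: (HB2 i).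
Qed.

End Defs.

Definition univT (R : realType) (d : nat) := 'rV[R]_d.
HB.instance Definition _ (R : realType) (d : nat) :=
  Pointed.on (univT R d).
HB.instance Definition _ (R : realType) (d : nat) :=
  @isMeasurable.Build default_measure_display (univT R d) (@univ_meas R d)
    (@univ_meas0 R d) (@univ_measC R d) (@univ_meas_bigcup R d).

Section Risk.
Variables (R : realType) (d : nat).

Definition is_norm (N : 'rV[R]_d -> R) : Prop :=
  [/\ forall x, N x = 0 -> x = 0,
      forall (a : R) x, N (a *: x) = `|a| * N x &
      forall x y, N (x + y) <= N x + N y].

Definition cball0 (N : 'rV[R]_d -> R) (eps : R) : set 'rV[R]_d :=
  [set b | N b <= eps].

Definition minkexp (N : 'rV[R]_d -> R) (eps : R) (A : set 'rV[R]_d) :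
  set 'rV[R]_d := [set a + b | a in A & b in cball0 N eps].

Definition minkshr (N : 'rV[R]_d -> R) (eps : R) (A : set 'rV[R]_d) :
  set 'rV[R]_d := ~` minkexp N eps (~` A).

Definition adv_risk (P : probability (univT R d) R) (eta : 'rV[R]_d -> R)
  (N : 'rV[R]_d -> R) (eps : R) (A : set 'rV[R]_d) : \bar R :=
  (\int[P]_(x in [set: univT R d])
     ((1 - eta x) * \1_(minkexp N eps A) x
      + eta x * \1_(minkexp N eps (~` A)) x)%:E)%E.

End Risk.

From HB Require Import structures.
From mathcomp Require Import all_boot all_order all_algebra.
From mathcomp Require Import all_classical all_reals all_analysis.
Import Order.TTheory GRing.Theory Num.Theory.
Local Open Scope classical_set_scope.
Local Open Scope ring_scope.

(* Since the ball is symmetric, every set C satisfies C ⊆ (C^ε)^{-ε} and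
   (C^{-ε})^ε ⊆ C.  Hence the ε-expansion of the closing (A^ε)^{-ε} lies in
   A^ε while its complement lies in A^C, and dually for the opening
   (A^{-ε})^ε.  As 0 <= η <= 1, the adversarial risk is monotone in the pair
   (A^ε, (A^C)^ε), which gives both inequalities.  No measurability of the
   integrands is needed: the integral of a nonnegative function is the
   supremum of the integrals of the simple functions below it. *)

Section Minkowski.
Variables (R : realType) (d : nat) (N : 'rV[R]_d -> R) (eps : R).
Hypothesis N_norm : is_norm N.

Lemma is_normN x : N (- x) = N x.
Proof. by case: N_norm => _ homN _; rewrite -scaleN1r homN normrN normr1 mul1r. Qed.

Lemma cball0N b : cball0 N eps b -> cball0 N eps (- b).
Proof. by rewrite /cball0 /= is_normN. Qed.

Lemma minkexpS S T : S `<=` T -> minkexp N eps S `<=` minkexp N eps T.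
Proof. by move=> ST _ [a Sa [b Bb <-]]; exists a; [exact: ST | exists b]. Qed.

Lemma sub_minkshr_minkexp C : C `<=` minkshr N eps (minkexp N eps C).
Proof.
move=> x Cx [y nCy [b Bb yb_x]]; apply: nCy.
by exists x => //; exists (- b); [exact: cball0N | rewrite -yb_x addrK].
Qed.

Lemma minkexp_minkshr_sub C : minkexp N eps (minkshr N eps C) `<=` C.
Proof.
move=> _ [x Cx [b Bb <-]]; apply: contrapT => nCxb; apply: Cx.
by exists (x + b) => //; exists (- b); [exact: cball0N | rewrite addrK].
Qed.

End Minkowski.

Lemma ler_indic (R : numDomainType) T (S U : set T) x :
  S `<=` U -> \1_S x <= \1_U x :> R.
Proof.
move=> SU; rewrite !indicE; have [/set_mem/SU/mem_set -> //|_] := boolP (x \in S).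
by case: (x \in U).
Qed.

Lemma ge0_le_integralT d (T : measurableType d) (R : realType)
    (mu : {measure set T -> \bar R}) (f g : T -> \bar R) :
  (forall x, (0 <= f x)%E) -> (forall x, (f x <= g x)%E) ->
  (\int[mu]_x f x <= \int[mu]_x g x)%E.
Proof.
move=> f0 fg; have g0 x : (0 <= g x)%E by apply: le_trans (fg x).
rewrite !ge0_integralTE //; apply: ereal_sup_le => _ [h hf <-].
by exists h => // x; apply: le_trans (fg x).
Qed.

Section AdversarialRisk.
Variables (R : realType) (d : nat) (P : probability (univT R d) R).
Variables (eta : 'rV[R]_d -> R) (N : 'rV[R]_d -> R) (eps : R).
Hypothesis eta01 : forall x, 0 <= eta x <= 1.

Lemma adv_risk_le B A :
  minkexp N eps B `<=` minkexp N eps A ->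
  minkexp N eps (~` B) `<=` minkexp N eps (~` A) ->
  (adv_risk P eta N eps B <= adv_risk P eta N eps A)%E.
Proof.
move=> BA nBnA; apply: ge0_le_integralT => x; rewrite lee_fin;
  have /andP[eta0 eta1] := eta01 x.
- by apply: addr_ge0; apply: mulr_ge0; rewrite ?subr_ge0.
- by apply: lerD; apply: ler_wpM2l; rewrite ?subr_ge0 //; exact: ler_indic.
Qed.

End AdversarialRisk.

Theorem lemma23 (R : realType) (d : nat)
  (P : probability (univT R d) R) (eta : 'rV[R]_d -> R)
  (eta_meas : measurable_fun [set: borelT R d] eta)
  (eta01 : forall x, 0 <= eta x <= 1)
  (N : 'rV[R]_d -> R) (N_norm : is_norm N)
  (eps : R) (eps_gt0 : 0 < eps)
  (A : set 'rV[R]_d) (A_univ : univ_meas A) :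
  (adv_risk P eta N eps (minkshr N eps (minkexp N eps A))
     <= adv_risk P eta N eps A)%E /\
  (adv_risk P eta N eps (minkexp N eps (minkshr N eps A))
     <= adv_risk P eta N eps A)%E.
Proof.
split; apply: adv_risk_le => //.
- exact: minkexp_minkshr_sub.
- by apply/minkexpS/subsetC; exact: sub_minkshr_minkexp.
- by apply: minkexpS; exact: minkexp_minkshr_sub.
- have := minkexp_minkshr_sub _ _ N eps N_norm (minkexp N eps (~` A)).
  by rewrite /minkshr.
Qed.
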